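(* Let $(q_n),(r_n)$ be complex sequences vanishing faster than any negative power of $|n|$ as $n\to\pm\infty$ with $1-q_nr_n\neq0$ and $1+q_nr_{n+1}\neq0$ for all $n\in\mathbb Z$. Set $D_n=\prod_{j=-\infty}^n(1-q_jr_j)$, $E_n=\prod_{j=-\infty}^n(1+q_jr_{j+1})$, and define $u_n=q_nE_{n-1}/D_n$ and $s_n=r_{n+1}D_n/E_n$. Then $$D_n=\frac1{\prod_{k=-\infty}^{n-1}(1+u_{k+1}s_k)},\qquad E_n=\frac1{\prod_{k=-\infty}^{n}(1-u_ks_k)},$$ $$q_n=u_n\prod_{k=-\infty}^{n-1}\frac{1-u_ks_k}{1+u_{k+1}s_k},\qquad r_n=s_{n-1}\prod_{k=-\infty}^{n-1}\frac{1+u_ks_{k-1}}{1-u_ks_k}.$$ *)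

From Stdlib Require Import Reals ZArith.
From Coquelicot Require Import Coquelicot.

(* partial left-product: lpart a n m = prod_{j = n-m}^{n} a j *)
Fixpoint lpart (a : Z -> C) (n : Z) (m : nat) : C :=
  match m with
  | O => a n
  | S m' => Cmult (a (n - Z.of_nat (S m'))%Z) (lpart a n m')
  end.

Definition is_lprod (a : Z -> C) (n : Z) (P : C) : Prop :=
  filterlim (lpart a n) eventually (locally P).

Definition rapidly_decreasing (a : Z -> C) : Prop :=
  forall (k : nat) (eps : R), (0 < eps)%R ->
    exists N : Z, forall n : Z, (N <= Z.abs n)%Z ->
      (IZR (Z.abs n) ^ k * Cmod (a n) < eps)%R.

From Stdlib Require Import Reals ZArith Lra Lia.
From Coquelicot Require Import Coquelicot.

(* D_n = D_(n-1) (1 - q_n r_n) and E_n = E_(n-1) (1 + q_n r_(n+1)) give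
   1 + u_(k+1) s_k = 1 / (1 - q_(k+1) r_(k+1)) and 1 - u_k s_k = 1 / (1 + q_k r_(k+1)),
   so all four products are termwise inverses or quotients of the products defining
   D and E.  Rapid decay is needed only to know that D_n and E_n do not vanish:
   a partial product over j <= n with sum |q_j r_j| <= 1/2 has modulus at least 1/2,
   so such a product with nonzero factors has a nonzero limit. *)

Section ComplexSequences.

Local Open Scope C_scope.

Lemma filterlim_Cmod (f : nat -> C) (L : C) :
  filterlim f eventually (locally L) <->
  forall eps : R, (0 < eps)%R ->
    exists N, forall m, (N <= m)%nat -> (Cmod (f m - L) < eps)%R.
Proof.
rewrite filterlim_locally_ball_norm. split.
- intros H eps Heps. exact (H (mkposreal eps Heps)).
- intros H eps. exact (H eps (cond_pos eps)).
Qed.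

(* Coquelicot's C_UniformSpace (product balls) and the uniform structure of the
   absolute-value ring C_AbsRing (Cmod balls) are not convertible, but they have the
   same limits. *)
Lemma filterlim_C_AbsRing {T : Type} {F : (T -> Prop) -> Prop} {FF : Filter F}
  (f : T -> C) (L : C) :
  filterlim f F (locally L) <->
  filterlim f F (@locally (AbsRing_UniformSpace C_AbsRing) L).
Proof.
rewrite (filterlim_locally_ball_norm (U := C_NormedModule)).
rewrite (filterlim_locally_ball_norm (U := AbsRing_NormedModule C_AbsRing)).
reflexivity.
Qed.

Lemma filterlim_C_unique (f : nat -> C) (x y : C) :
  filterlim f eventually (locally x) -> filterlim f eventually (locally y) -> x = y.
Proof.
exact (@filterlim_locally_unique _ C_AbsRing C_NormedModule _
  (Proper_StrongProper _ eventually_filter) f x y).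
Qed.

Lemma filterlim_Cmult (f g : nat -> C) (x y : C) :
  filterlim f eventually (locally x) -> filterlim g eventually (locally y) ->
  filterlim (fun m => f m * g m) eventually (locally (x * y)).
Proof.
rewrite !filterlim_C_AbsRing. intros Hf Hg.
exact (filterlim_comp_2 f g (@mult C_AbsRing) Hf Hg (filterlim_mult x y)).
Qed.

Lemma filterlim_Cinv (f : nat -> C) (L : C) :
  L <> 0 -> filterlim f eventually (locally L) ->
  filterlim (fun m => / f m) eventually (locally (/ L)).
Proof.
intros HL0. rewrite !filterlim_Cmod. intros Hf eps Heps.
assert (HL : (0 < Cmod L)%R) by now apply Cmod_gt_0.
set (d := Rmin (Cmod L / 2) (eps * (Cmod L * Cmod L) / 2)).
assert (HL2 : (0 < eps * (Cmod L * Cmod L))%R) by (apply Rmult_lt_0_compat; nra).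
assert (Hd : (0 < d)%R) by (apply Rmin_pos; lra).
destruct (Hf d Hd) as [N HN]. exists N. intros m Hm.
assert (Hd1 : (Cmod (f m - L) < Cmod L / 2)%R)
  by exact (Rlt_le_trans _ _ _ (HN m Hm) (Rmin_l _ _)).
assert (Hd2 : (Cmod (f m - L) < eps * (Cmod L * Cmod L) / 2)%R)
  by exact (Rlt_le_trans _ _ _ (HN m Hm) (Rmin_r _ _)).
assert (Hfm : (Cmod L / 2 < Cmod (f m))%R).
{ pose proof (Cmod_triangle (- (f m - L)) (f m)) as T.
  replace (- (f m - L) + f m) with L in T by ring.
  rewrite Cmod_opp in T. lra. }
assert (Hf0 : f m <> 0) by (apply Cmod_gt_0; lra).
replace (/ f m - / L) with (- (f m - L) * / (f m * L)) by (field; auto).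
rewrite Cmod_mult, Cmod_opp, Cmod_inv, Cmod_mult by (apply Cmult_neq_0; auto).
apply (Rmult_lt_reg_r (Cmod (f m) * Cmod L)); [nra|].
rewrite Rmult_assoc, Rinv_l by nra. nra.
Qed.

End ComplexSequences.

Section PartialProducts.

Local Open Scope C_scope.

Variable a : Z -> C.

Lemma lpart_succ (n : Z) (m : nat) : lpart a n (S m) = lpart a (n - 1) m * a n.
Proof.
revert n. induction m as [|m IH]; intros n.
- cbn [lpart]. f_equal; f_equal; lia.
- cbn [lpart] in *. rewrite IH. cbn [lpart].
  replace (n - 1 - Z.of_nat (S m))%Z with (n - Z.of_nat (S (S m)))%Z by lia. ring.
Qed.

Lemma lpart_add (n : Z) (m k : nat) :
  lpart a n (m + S k) = lpart a (n - Z.of_nat (S k)) m * lpart a n k.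
Proof.
revert n. induction k as [|k IH]; intros n.
- rewrite Nat.add_1_r, lpart_succ. now replace (n - Z.of_nat 1)%Z with (n - 1)%Z by lia.
- rewrite Nat.add_succ_r, lpart_succ, IH, (lpart_succ n k).
  replace (n - 1 - Z.of_nat (S k))%Z with (n - Z.of_nat (S (S k)))%Z by lia. ring.
Qed.

Lemma lpart_shift (n : Z) (m : nat) : lpart (fun k => a (k + 1)%Z) (n - 1) m = lpart a n m.
Proof. induction m as [|m IH]; cbn [lpart]; [|rewrite IH]; do 2 f_equal; lia. Qed.

Lemma lpart_neq0 (n : Z) (m : nat) : (forall j, a j <> 0) -> lpart a n m <> 0.
Proof. intros Ha. induction m; cbn [lpart]; auto using Cmult_neq_0. Qed.

Lemma lpart_inv (n : Z) (m : nat) : (forall j, a j <> 0) ->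
  lpart (fun j => / a j) n m = / lpart a n m.
Proof.
intros Ha. induction m as [|m IH]; cbn [lpart]; [reflexivity|].
rewrite IH. field. split; [apply lpart_neq0|]; auto.
Qed.

Variable b : Z -> C.

Lemma lpart_ext (n : Z) (m : nat) : (forall j, a j = b j) -> lpart a n m = lpart b n m.
Proof. intros Hab. induction m; cbn [lpart]; congruence. Qed.

Lemma lpart_mult (n : Z) (m : nat) :
  lpart (fun j => a j * b j) n m = lpart a n m * lpart b n m.
Proof. induction m as [|m IH]; cbn [lpart]; [|rewrite IH]; ring. Qed.

End PartialProducts.

Section InfiniteProducts.

Local Open Scope C_scope.

Lemma is_lprod_ext (a b : Z -> C) (n : Z) (P : C) :
  (forall j, a j = b j) -> is_lprod a n P -> is_lprod b n P.
Proof. intros Hab. apply filterlim_ext. intros m. now apply lpart_ext. Qed.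

Lemma is_lprod_shift (a : Z -> C) (n : Z) (P : C) :
  is_lprod a n P -> is_lprod (fun k => a (k + 1)%Z) (n - 1) P.
Proof. apply filterlim_ext. intros m. now rewrite lpart_shift. Qed.

Lemma is_lprod_mult (a b : Z -> C) (n : Z) (P Q : C) :
  is_lprod a n P -> is_lprod b n Q -> is_lprod (fun j => a j * b j) n (P * Q).
Proof.
intros Ha Hb. apply (filterlim_ext (fun m => lpart a n m * lpart b n m)).
- intros m. now rewrite lpart_mult.
- now apply filterlim_Cmult.
Qed.

Lemma is_lprod_inv (a : Z -> C) (n : Z) (P : C) :
  (forall j, a j <> 0) -> P <> 0 -> is_lprod a n P -> is_lprod (fun j => / a j) n (/ P).
Proof.
intros Ha HP HaP. apply (filterlim_ext (fun m => / lpart a n m)).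
- intros m. now rewrite lpart_inv.
- now apply filterlim_Cinv.
Qed.

Lemma is_lprod_pred (a : Z -> C) (n : Z) (P Q : C) :
  is_lprod a n P -> is_lprod a (n - 1) Q -> P = Q * a n.
Proof.
intros HP HQ. apply (filterlim_C_unique (fun m => lpart a n (S m))).
- exact (filterlim_comp _ _ _ S (lpart a n) _ _ _ (eventually_subseq S (fun m => Nat.lt_succ_diag_r _)) HP).
- apply (filterlim_ext (fun m => lpart a (n - 1) m * a n)).
  + intros m. now rewrite lpart_succ.
  + apply filterlim_Cmult; [exact HQ | apply filterlim_const].
Qed.

Definition lpart_dev (a : Z -> C) (n : Z) (m : nat) : R :=
  sum_f_R0 (fun i => Cmod (a (n - Z.of_nat i)%Z - 1)) m.

Lemma Cmod_lpart_ge (a : Z -> C) (n : Z) (m : nat) :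
  (lpart_dev a n m <= 1)%R -> (1 - lpart_dev a n m <= Cmod (lpart a n m))%R.
Proof.
assert (Hfactor : forall x : C, (1 - Cmod (x - 1) <= Cmod x)%R).
{ intros x. pose proof (Cmod_triangle x (- (x - 1))) as T.
  replace (x + - (x - 1)) with (RtoC 1) in T by ring.
  rewrite Cmod_opp, Cmod_1 in T. lra. }
unfold lpart_dev. induction m as [|m IH]; cbn [lpart sum_f_R0]; intros Hdev.
- replace (n - Z.of_nat 0)%Z with n by lia. apply Hfactor.
- set (x := a (n - Z.of_nat (S m))%Z) in *.
  assert (Hsum := cond_pos_sum (fun i => Cmod (a (n - Z.of_nat i)%Z - 1)) m
                    (fun i => Cmod_ge_0 _)).
  pose proof (Cmod_ge_0 (x - 1)). pose proof (Hfactor x).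
  pose proof (IH ltac:(lra)). rewrite Cmod_mult. nra.
Qed.

Lemma is_lprod_neq0 (a : Z -> C) (N n : Z) (P : C) :
  (forall j, a j <> 0) ->
  (forall n' m, (n' <= N)%Z -> (lpart_dev a n' m <= 1 / 2)%R) ->
  is_lprod a n P -> P <> 0.
Proof.
intros Ha Hdev HP ->.
set (k := Z.to_nat (n - N)).
assert (HF : (0 < Cmod (lpart a n k))%R) by now apply Cmod_gt_0, lpart_neq0.
destruct (proj1 (filterlim_Cmod _ _) HP (Cmod (lpart a n k) / 2)%R ltac:(lra)) as [M HM].
specialize (HM (M + S k)%nat ltac:(lia)).
replace (lpart a n (M + S k) - 0) with (lpart a n (M + S k)) in HM by ring.
rewrite lpart_add, Cmod_mult in HM.
assert (Htail := Hdev (n - Z.of_nat (S k))%Z M ltac:(unfold k; lia)).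
assert (Hlow := Cmod_lpart_ge a (n - Z.of_nat (S k)) M ltac:(lra)).
nra.
Qed.

End InfiniteProducts.

Lemma inv_sqr_le_telescope (y : R) : 0 < y -> / (y + 1) ^ 2 <= / y - / (y + 1).
Proof.
intros Hy. replace (/ y - / (y + 1)) with (/ (y * (y + 1))) by (field; lra).
apply Rinv_le_contravar; nra.
Qed.

Lemma sum_inv_sqr_le (x : R) (m : nat) :
  2 <= x -> sum_f_R0 (fun i => / (x + INR i) ^ 2) m <= / (x - 1).
Proof.
intros Hx.
assert (Htele : sum_f_R0 (fun i => / (x + INR i) ^ 2) m <= / (x - 1) - / (x + INR m)).
{ induction m as [|m IH]; cbn [sum_f_R0].
  - replace (x + INR 0) with (x - 1 + 1) by (simpl; ring).
    apply inv_sqr_le_telescope. lra.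
  - rewrite S_INR. pose proof (pos_INR m).
    pose proof (inv_sqr_le_telescope (x + INR m) ltac:(lra)).
    replace (x + (INR m + 1)) with (x + INR m + 1) by ring. lra. }
assert (0 < / (x + INR m)) by (apply Rinv_0_lt_compat; pose proof (pos_INR m); lra).
lra.
Qed.

Lemma rapidly_decreasing_lpart_dev (q r a : Z -> C) (sh : Z) :
  rapidly_decreasing q -> rapidly_decreasing r ->
  (forall j, Cmod (a j - 1)%C = Cmod (q j * r (j + sh)%Z)%C) ->
  exists N, forall n m, (n <= N)%Z -> lpart_dev a n m <= 1 / 2.
Proof.
intros Hq Hr Ha.
destruct (Hq 2%nat (1 / 2) ltac:(lra)) as [Nq HNq].
destruct (Hr 0%nat 1 ltac:(lra)) as [Nr HNr].
exists (- (Z.abs Nq + Z.abs Nr + Z.abs sh + 2))%Z. intros n m Hn.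
assert (Hx : 2 <= - IZR n) by (rewrite <- opp_IZR; apply IZR_le; lia).
apply Rle_trans with (/ 2 * sum_f_R0 (fun i => / (- IZR n + INR i) ^ 2) m).
- rewrite scal_sum. apply sum_Rle. intros i _. rewrite Ha, Cmod_mult.
  set (j := (n - Z.of_nat i)%Z).
  set (x := - IZR n + INR i).
  assert (Hx0 : 0 < x) by (pose proof (pos_INR i); unfold x; lra).
  assert (Hy : 0 < x ^ 2) by now apply pow_lt.
  specialize (HNq j ltac:(unfold j; lia)). specialize (HNr (j + sh)%Z ltac:(unfold j; lia)).
  rewrite abs_IZR, pow2_abs in HNq. simpl pow in HNr.
  replace (IZR j ^ 2) with (x ^ 2) in HNq
    by (unfold j, x; rewrite minus_IZR, INR_IZR_INZ; ring).
  assert (Hqj : Cmod (q j) <= / 2 * / x ^ 2).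
  { replace (Cmod (q j)) with (x ^ 2 * Cmod (q j) * / x ^ 2) by (field; lra).
    apply Rmult_le_compat_r; [left; now apply Rinv_0_lt_compat | lra]. }
  pose proof (Cmod_ge_0 (q j)). pose proof (Cmod_ge_0 (r (j + sh)%Z)). nra.
- pose proof (sum_inv_sqr_le (- IZR n) m Hx).
  assert (/ (- IZR n - 1) <= 1) by (rewrite <- Rinv_1; apply Rinv_le_contravar; lra).
  lra.
Qed.

Lemma is_lprod_neq0_rapidly_decreasing (q r a : Z -> C) (sh n : Z) (P : C) :
  rapidly_decreasing q -> rapidly_decreasing r ->
  (forall j, a j <> 0%C) ->
  (forall j, Cmod (a j - 1)%C = Cmod (q j * r (j + sh)%Z)%C) ->
  is_lprod a n P -> P <> 0%C.
Proof.
intros Hq Hr Ha Hdev.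
destruct (rapidly_decreasing_lpart_dev q r a sh Hq Hr Hdev) as [N HN].
exact (is_lprod_neq0 a N n P Ha HN).
Qed.

Section Inversion.

Local Open Scope C_scope.

Variables q r D E : Z -> C.

Hypothesis HaD : forall n, 1 - q n * r n <> 0.
Hypothesis HaE : forall n, 1 + q n * r (n + 1)%Z <> 0.
Hypothesis HD : forall n, is_lprod (fun j => 1 - q j * r j) n (D n).
Hypothesis HE : forall n, is_lprod (fun j => 1 + q j * r (j + 1)%Z) n (E n).
Hypothesis HD0 : forall n, D n <> 0.
Hypothesis HE0 : forall n, E n <> 0.

Let u n := q n * E (n - 1)%Z / D n.
Let s n := r (n + 1)%Z * D n / E n.

Lemma D_pred (n : Z) : D n = D (n - 1)%Z * (1 - q n * r n).
Proof. exact (is_lprod_pred _ n _ _ (HD n) (HD (n - 1)%Z)). Qed.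

Lemma E_pred (n : Z) : E n = E (n - 1)%Z * (1 + q n * r (n + 1)%Z).
Proof. exact (is_lprod_pred _ n _ _ (HE n) (HE (n - 1)%Z)). Qed.

Lemma one_add_u_succ_s (k : Z) : 1 + u (k + 1)%Z * s k = / (1 - q (k + 1)%Z * r (k + 1)%Z).
Proof.
unfold u, s. rewrite (D_pred (k + 1)). replace (k + 1 - 1)%Z with k by lia.
field. repeat split; auto.
Qed.

Lemma one_sub_u_s (k : Z) : 1 - u k * s k = / (1 + q k * r (k + 1)%Z).
Proof. unfold u, s. rewrite (E_pred k). field. repeat split; auto. Qed.

Lemma is_lprod_D_inv (n : Z) : is_lprod (fun k => 1 + u (k + 1)%Z * s k) (n - 1) (/ D n).
Proof.
apply (is_lprod_ext (fun k => / (1 - q (k + 1)%Z * r (k + 1)%Z))).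
- intros k. now rewrite one_add_u_succ_s.
- apply (is_lprod_shift (fun j => / (1 - q j * r j))). now apply is_lprod_inv.
Qed.

Lemma is_lprod_E_inv (n : Z) : is_lprod (fun k => 1 - u k * s k) n (/ E n).
Proof.
apply (is_lprod_ext (fun k => / (1 + q k * r (k + 1)%Z))).
- intros k. now rewrite one_sub_u_s.
- now apply is_lprod_inv.
Qed.

Lemma is_lprod_q (n : Z) :
  is_lprod (fun k => (1 - u k * s k) / (1 + u (k + 1)%Z * s k)) (n - 1) (D n / E (n - 1)%Z).
Proof.
apply (is_lprod_ext (fun k => (1 - q (k + 1)%Z * r (k + 1)%Z) * / (1 + q k * r (k + 1)%Z))).
- intros k. rewrite one_add_u_succ_s, one_sub_u_s. field. split; auto.
- apply is_lprod_mult.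
  + apply (is_lprod_shift (fun j => 1 - q j * r j)), HD.
  + now apply is_lprod_inv.
Qed.

Lemma is_lprod_r (n : Z) :
  is_lprod (fun k => (1 + u k * s (k - 1)%Z) / (1 - u k * s k)) (n - 1)
    (E (n - 1)%Z / D (n - 1)%Z).
Proof.
apply (is_lprod_ext (fun k => (1 + q k * r (k + 1)%Z) * / (1 - q k * r k))).
- intros k. pose proof (one_add_u_succ_s (k - 1)) as Hk.
  replace (k - 1 + 1)%Z with k in Hk by lia.
  rewrite Hk, one_sub_u_s. field. split; auto.
- apply is_lprod_mult; [apply HE | now apply is_lprod_inv].
Qed.

End Inversion.

Theorem proposition3p2 (q r : Z -> C) (D E : Z -> C) :
  rapidly_decreasing q -> rapidly_decreasing r ->
  (forall n : Z, Cminus 1 (Cmult (q n) (r n)) <> 0) ->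
  (forall n : Z, Cplus 1 (Cmult (q n) (r (n + 1)%Z)) <> 0) ->
  (forall n : Z, is_lprod (fun j => Cminus 1 (Cmult (q j) (r j))) n (D n)) ->
  (forall n : Z, is_lprod (fun j => Cplus 1 (Cmult (q j) (r (j + 1)%Z))) n (E n)) ->
  let u := fun n : Z => Cdiv (Cmult (q n) (E (n - 1)%Z)) (D n) in
  let s := fun n : Z => Cdiv (Cmult (r (n + 1)%Z) (D n)) (E n) in
  forall n : Z,
    (exists P, is_lprod (fun k => Cplus 1 (Cmult (u (k + 1)%Z) (s k))) (n - 1)%Z P
               /\ D n = Cinv P) /\
    (exists P, is_lprod (fun k => Cminus 1 (Cmult (u k) (s k))) n P
               /\ E n = Cinv P) /\
    (exists P, is_lprod (fun k => Cdiv (Cminus 1 (Cmult (u k) (s k)))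
                                       (Cplus 1 (Cmult (u (k + 1)%Z) (s k)))) (n - 1)%Z P
               /\ q n = Cmult (u n) P) /\
    (exists P, is_lprod (fun k => Cdiv (Cplus 1 (Cmult (u k) (s (k - 1)%Z)))
                                       (Cminus 1 (Cmult (u k) (s k)))) (n - 1)%Z P
               /\ r n = Cmult (s (n - 1)%Z) P).
Proof.
intros Hq Hr HaD HaE HD HE u s n.
assert (HD0 : forall k, D k <> 0%C).
{ intros k. apply (is_lprod_neq0_rapidly_decreasing q r _ 0 k _ Hq Hr HaD); [|apply HD].
  intros j. rewrite Z.add_0_r, <- Cmod_opp. f_equal. ring. }
assert (HE0 : forall k, E k <> 0%C).
{ intros k. apply (is_lprod_neq0_rapidly_decreasing q r _ 1 k _ Hq Hr HaE); [|apply HE].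
  intros j. f_equal. ring. }
split; [|split; [|split]].
- exists (/ D n)%C. split; [now apply is_lprod_D_inv | field; auto].
- exists (/ E n)%C. split; [now apply is_lprod_E_inv | field; auto].
- exists (D n / E (n - 1)%Z)%C. split; [now apply is_lprod_q | unfold u; field; auto].
- exists (E (n - 1)%Z / D (n - 1)%Z)%C. split; [now apply is_lprod_r |].
  unfold s. replace (n - 1 + 1)%Z with n by lia. field. auto.
Qed.
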